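(* Let $G$ be a finite connected groupoid with $G_0=\{e_1,\dots,e_r\}$, $A=\bigoplus_{i=1}^r A_i$ a unital ring with $A_i:=A_{e_i}$ having identity $1_i$, and $\alpha=(A_g,\alpha_g)_{g\in G}$ a unital partial action of $G$ on $A$. Suppose that there exist $a\in C(A)$ and $k\in\{1,\dots,r\}$ with $t_k(a)=1_k$, and that for each $j\in\{1,\dots,r\}$ there exists $g_j\in G(e_k,e_j)$ with $1_{g_j}=1_j$. Then $A\subset A\star_\alpha G$ is a separable extension.
   Context: A groupoid $G$ is a small category in which every morphism is invertible; $G_0$ is its object set (objects identified with identity morphisms), $s,t$ source and target; $gh$ is defined iff $s(g)=t(h)$; $G(e,f)$ is the set of morphisms from $e$ to $f$; $G$ is connected if $G(e,f)\neq\emptyset$ for all $e,f\in G_0$. A unital partial action of $G$ on $A$ is a family $\alpha=(A_g,\alpha_g)_{g\in G}$ where $A_{t(g)}$ is a two-sided ideal of $A$, $A_g=A1_g$ is a two-sided ideal of $A_{t(g)}$ with $1_g$ a central idempotent of $A$, $\alpha_g:A_{g^{-1}}\to A_g$ a ring isomorphism, such that $\alpha_e=\mathrm{id}_{A_e}$ for $e\in G_0$, $\alpha_h^{-1}(A_{g^{-1}}\cap A_h)\subseteq A_{(gh)^{-1}}$ and $\alpha_g(\alpha_h(x))=\alpha_{gh}(x)$ for $x\in\alpha_h^{-1}(A_{g^{-1}}\cap A_h)$, whenever $s(g)=t(h)$. The partial skew groupoid ring $A\star_\alpha G=\bigoplus_{g\in G}A_g\delta_g$ has multiplication $(a_g\delta_g)(b_h\delta_h)=\alpha_g(\alpha_{g^{-1}}(a_g)b_h)\delta_{gh}$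 if $s(g)=t(h)$ and $0$ otherwise; it is unital with $1=\sum_{e\in G_0}1_e\delta_e$, and $A$ is regarded as a subring via $a\mapsto\sum_{e\in G_0}(a1_e)\delta_e$. Trace maps: $t_{i,j}(a)=\sum_{g\in G(e_i,e_j)}\alpha_g(a1_{g^{-1}})$ and $t_j(a)=\sum_{i=1}^r t_{i,j}(a)$. $C(A)$ is the center of $A$. A ring extension $R\subseteq S$ is separable if the multiplication map $S\otimes_R S\to S$ splits as a map of $(S,S)$-bimodules; equivalently there exists $x\in S\otimes_R S$ with $m(x)=1_S$ and $sx=xs$ for all $s\in S$. *)

From HB Require Import structures.
From mathcomp Require Import all_boot all_algebra.
Set Implicit Arguments. Unset Strict Implicit. Unset Printing Implicit Defensive.
Import GRing.Theory.
Local Open Scope ring_scope.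

(* Finite groupoids.  Morphisms form the finite type G; objects are          *)
(* identified with identity morphisms, i.e. G_0 = {e | s e = e}.             *)
(* gmul g h is the composite gh (meaningful only when s g = t h).            *)
Record groupoid (G : finType) := Groupoid {
  gs : G -> G;
  gt : G -> G;
  gmul : G -> G -> G;
  ginv : G -> G;
  gs_s : forall g, gs (gs g) = gs g;
  gt_s : forall g, gt (gs g) = gs g;
  gs_t : forall g, gs (gt g) = gt g;
  gt_t : forall g, gt (gt g) = gt g;
  gs_mul : forall g h, gs g = gt h -> gs (gmul g h) = gs h;
  gt_mul : forall g h, gs g = gt h -> gt (gmul g h) = gt g;
  gmulA : forall g h k, gs g = gt h -> gs h = gt k ->
            gmul g (gmul h k) = gmul (gmul g h) k;
  gmul_tl : forall g, gmul (gt g) g = g;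
  gmul_sr : forall g, gmul g (gs g) = g;
  gs_inv : forall g, gs (ginv g) = gt g;
  gt_inv : forall g, gt (ginv g) = gs g;
  gmulV : forall g, gmul g (ginv g) = gt g;
  gmulVg : forall g, gmul (ginv g) g = gs g
}.

Definition gobj (G : finType) (Gd : groupoid G) : pred G :=
  [pred e | gs Gd e == e].

Definition ghom (G : finType) (Gd : groupoid G) (e f : G) : pred G :=
  [pred g | (gs Gd g == e) && (gt Gd g == f)].

Definition gconnected (G : finType) (Gd : groupoid G) : Prop :=
  forall e f, e \in gobj Gd -> f \in gobj Gd -> exists g, g \in ghom Gd e f.

Definition in_ideal (A : pzRingType) (u : A) (x : A) : Prop :=
  exists b : A, x = b * u.

Record upaction (G : finType) (Gd : groupoid G) (A : pzRingType) := UPAction {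
  pone : G -> A;
  palpha : G -> A -> A;          (* g |-> alpha_g, meaningful on A_{g^-1} *)
  pone_central : forall g (x : A), pone g * x = x * pone g;
  pone_idem : forall g, pone g * pone g = pone g;
  (* A_g is contained in A_{t(g)} (ideal-ness is automatic, 1_g being central) *)
  pideal_sub : forall g x, in_ideal (pone g) x -> in_ideal (pone (gt Gd g)) x;
  palpha_into : forall g x, in_ideal (pone (ginv Gd g)) x ->
                  in_ideal (pone g) (palpha g x);
  palphaD : forall g x y, in_ideal (pone (ginv Gd g)) x ->
              in_ideal (pone (ginv Gd g)) y ->
              palpha g (x + y) = palpha g x + palpha g y;
  palphaM : forall g x y, in_ideal (pone (ginv Gd g)) x ->
              in_ideal (pone (ginv Gd g)) y ->
              palpha g (x * y) = palpha g x * palpha g y;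
  palpha_inj : forall g x y, in_ideal (pone (ginv Gd g)) x ->
              in_ideal (pone (ginv Gd g)) y ->
              palpha g x = palpha g y -> x = y;
  palpha_onto : forall g y, in_ideal (pone g) y ->
              exists2 x, in_ideal (pone (ginv Gd g)) x & palpha g x = y;
  palpha_obj : forall e x, e \in gobj Gd -> in_ideal (pone e) x ->
              palpha e x = x;
  palpha_comp : forall g h x, gs Gd g = gt Gd h ->
              in_ideal (pone (ginv Gd h)) x ->
              in_ideal (pone (ginv Gd g)) (palpha h x) ->
              in_ideal (pone (ginv Gd (gmul Gd g h))) x /\
              palpha g (palpha h x) = palpha (gmul Gd g h) x
}.

Definition obj_direct_sum (G : finType) (Gd : groupoid G) (A : pzRingType)
    (alpha : upaction Gd A) : Prop :=
  (forall a : A, exists f : G -> A,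
      (forall e, e \in gobj Gd -> in_ideal (pone alpha e) (f e)) /\
      a = \sum_(e in gobj Gd) f e) /\
  (forall f : G -> A,
      (forall e, e \in gobj Gd -> in_ideal (pone alpha e) (f e)) ->
      \sum_(e in gobj Gd) f e = 0 -> forall e, e \in gobj Gd -> f e = 0).

Definition trace_ij (G : finType) (Gd : groupoid G) (A : pzRingType)
    (alpha : upaction Gd A) (ei ej : G) (a : A) : A :=
  \sum_(g in ghom Gd ei ej) palpha alpha g (a * pone alpha (ginv Gd g)).

Definition trace_j (G : finType) (Gd : groupoid G) (A : pzRingType)
    (alpha : upaction Gd A) (ej : G) (a : A) : A :=
  \sum_(ei in gobj Gd) trace_ij alpha ei ej a.

Definition center_of (A : pzRingType) (a : A) : Prop := forall b : A, a * b = b * a.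

(* The partial skew groupoid ring A *_alpha G: elements are functions        *)
(* f : G -> A with f g in A_g  (f represents sum_g f(g) delta_g).            *)
Definition skew_elt (G : finType) (Gd : groupoid G) (A : pzRingType)
    (alpha : upaction Gd A) (f : G -> A) : Prop :=
  forall g, in_ideal (pone alpha g) (f g).

Definition skew_add (G : finType) (A : pzRingType) (f f' : G -> A) : G -> A :=
  fun g => f g + f' g.

Definition skew_zero (G : finType) (A : pzRingType) : G -> A := fun _ => 0.

(* (a_g delta_g)(b_h delta_h) = alpha_g(alpha_{g^-1}(a_g) b_h) delta_{gh} if s g = t h *)
Definition skew_mul (G : finType) (Gd : groupoid G) (A : pzRingType)
    (alpha : upaction Gd A) (f f' : G -> A) : G -> A :=
  fun k => \sum_(g : G) \sum_(h : G | (gs Gd g == gt Gd h) && (gmul Gd g h == k))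
              palpha alpha g (palpha alpha (ginv Gd g) (f g) * f' h).

Definition skew_emb (G : finType) (Gd : groupoid G) (A : pzRingType)
    (alpha : upaction Gd A) (a : A) : G -> A :=
  fun g => if g \in gobj Gd then a * pone alpha g else 0.

(* Separable extensions.  A ring S (carrier T, elements satisfying inS,     *)
(* operations add/zero/mul/one) over a subring R (predicate inR).            *)
(* Equality in S (x)_R S of sum_i u_i (x) v_i and sum_i u'_i (x) v'_i is     *)
(* expressed through the universal property of the tensor product: the two  *)
(* sums agree under every R-balanced biadditive map into an abelian group.  *)
Definition balanced (T : Type) (inS inR : T -> Prop) (add mul : T -> T -> T)
    (M : zmodType) (b : T -> T -> M) : Prop :=
  (forall x x' y, inS x -> inS x' -> inS y -> b (add x x') y = b x y + b x' y) /\
  (forall x y y', inS x -> inS y -> inS y' -> b x (add y y') = b x y + b x y') /\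
  (forall x r y, inS x -> inR r -> inS y -> b (mul x r) y = b x (mul r y)).

Definition tensor_eq (T : Type) (inS inR : T -> Prop) (add mul : T -> T -> T)
    (n : nat) (u v u' v' : 'I_n -> T) : Prop :=
  forall (M : zmodType) (b : T -> T -> M), balanced inS inR add mul b ->
    \sum_(i < n) b (u i) (v i) = \sum_(i < n) b (u' i) (v' i).

Definition separable_ext (T : Type) (inS inR : T -> Prop)
    (add mul : T -> T -> T) (zero one : T) : Prop :=
  exists (n : nat) (x y : 'I_n -> T),
    (forall i, inS (x i) /\ inS (y i)) /\
    \big[add/zero]_(i < n) mul (x i) (y i) = one /\
    (forall s, inS s ->
       tensor_eq inS inR add mul (fun i => mul s (x i)) y x (fun i => mul (y i) s)).

Definition skew_separable (G : finType) (Gd : groupoid G) (A : pzRingType)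
    (alpha : upaction Gd A) : Prop :=
  separable_ext (skew_elt alpha)
    (fun r => exists a : A, r = skew_emb alpha a)
    (@skew_add G A) (skew_mul alpha) (@skew_zero G A) (skew_emb alpha 1).

From HB Require Import structures.
From mathcomp Require Import all_boot all_algebra.
From Stdlib Require Import FunctionalExtensionality.
Set Implicit Arguments. Unset Strict Implicit. Unset Printing Implicit Defensive.
Import GRing.Theory.
Local Open Scope ring_scope.

(* The separability idempotent is x = Σ_(p ∈ G) 1_p δ_p ⊗ a 1_(p⁻¹) δ_(p⁻¹).
   Its product is Σ_j t_j(a) δ_(e_j); the trace condition at e_k moves to every
   object e_j along g_j because 1_(g_j) = 1_j, so the product is 1.  For
   s = Σ_h s_h δ_h, both s x and x s expand into sums of elementary tensors.
   Since c δ_q = (1_q δ_q) α_(q⁻¹)(c), the coefficient α_(q⁻¹)(s_h 1_q) can be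
   moved across ⊗, and a past it by centrality; this turns both into
   Σ_(t q = t h) 1_q δ_q ⊗ a α_(q⁻¹)(s_h 1_q) δ_(q⁻¹ h)
   (for s x after the change of variables q = h p). *)

Section Groupoid.
Variables (G : finType) (Gd : groupoid G).
Local Notation s := (gs Gd).
Local Notation t := (gt Gd).
Local Notation mul := (gmul Gd).
Local Notation inv := (ginv Gd).

Lemma gmulKg g h : s g = t h -> mul (inv g) (mul g h) = h.
Proof. by move=> E; rewrite gmulA ?gs_inv ?gt_mul // gmulVg E gmul_tl. Qed.

Lemma gmulgK g h : s g = t h -> mul (mul g h) (inv h) = g.
Proof. by move=> E; rewrite -gmulA ?gs_mul ?gt_inv // gmulV -E gmul_sr. Qed.

Lemma ginvK g : inv (inv g) = g.
Proof.
rewrite -[inv (inv g)](gmul_sr Gd) gs_inv gt_inv -gmulVg gmulA ?gs_inv ?gt_inv //.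
by rewrite gmulVg gs_inv gmul_tl.
Qed.

Lemma gobj_s e : e \in gobj Gd -> s e = e.
Proof. by rewrite inE => /eqP. Qed.

Lemma gobj_t e : e \in gobj Gd -> t e = e.
Proof. by move=> /gobj_s E; rewrite -E gt_s. Qed.

Lemma gobj_inv e : e \in gobj Gd -> inv e = e.
Proof.
move=> He; rewrite -[inv e](gmul_tl Gd) gt_inv (gobj_s He) gmulV.
exact: gobj_t.
Qed.

Lemma gs_gobj g : s g \in gobj Gd.
Proof. by rewrite inE gs_s. Qed.

Lemma gt_gobj g : t g \in gobj Gd.
Proof. by rewrite inE gs_t. Qed.

Lemma ginvMKl g h : s g = t h -> mul (inv (mul g h)) g = inv h.
Proof. by move=> E; rewrite -{2}[g](gmulgK E) gmulKg // gs_mul // gt_inv. Qed.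

Lemma ginvM g h : s g = t h -> inv (mul g h) = mul (inv h) (inv g).
Proof.
move=> E; rewrite -{1}[inv (mul g h)](gmul_sr Gd) gs_inv gt_mul // -(gmulV Gd g).
by rewrite gmulA ?ginvMKl // ?gt_inv // gs_inv gt_mul.
Qed.

Lemma sum_gmul_left (V : zmodType) g (F : G -> V) :
  \sum_(h | t h == s g) F (mul g h) = \sum_(k | t k == t g) F k.
Proof.
symmetry; rewrite (reindex_onto (mul g) (mul (inv g))) => [|k /eqP tk]; last first.
  by rewrite -{1}[g]ginvK gmulKg // gs_inv.
apply: eq_bigl => h; case: (t h =P s g) => [E|NE].
  by rewrite gt_mul // eqxx gmulKg // eqxx.
apply/negbTE/negP => /andP[/eqP tk /eqP hk]; apply: NE.
by rewrite -hk gt_mul ?gt_inv // gs_inv tk.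
Qed.

End Groupoid.

Section PartialAction.
Variables (G : finType) (Gd : groupoid G) (A : pzRingType) (alpha : upaction Gd A).
Local Notation s := (gs Gd).
Local Notation t := (gt Gd).
Local Notation mul := (gmul Gd).
Local Notation inv := (ginv Gd).
Local Notation one := (pone alpha).
Local Notation act := (palpha alpha).

Lemma in_idealE g x : in_ideal (one g) x <-> x * one g = x.
Proof.
split=> [[b ->]|E]; first by rewrite -mulrA pone_idem.
by exists x.
Qed.

Lemma ideal_mulr g x y : x * one g = x -> x * y * one g = x * y.
Proof. by move=> E; rewrite -mulrA -pone_central mulrA E. Qed.

Lemma ideal_gt g x : x * one g = x -> x * one (t g) = x.
Proof. by move=> /in_idealE/pideal_sub/in_idealE. Qed.

Lemma palpha_ideal g x : x * one (inv g) = x -> act g x * one g = act g x.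
Proof. by move=> /in_idealE/palpha_into/in_idealE. Qed.

Lemma palpha0 g : act g 0 = 0.
Proof.
have h0 : in_ideal (one (inv g)) 0 by apply/in_idealE; rewrite mul0r.
have := palphaD h0 h0; rewrite addr0 => E.
by apply: (@addrI _ (act g 0)); rewrite addr0 -E.
Qed.

Lemma palpha_add g x y : x * one (inv g) = x -> y * one (inv g) = y ->
  act g (x + y) = act g x + act g y.
Proof. by move=> /in_idealE hx /in_idealE hy; apply: palphaD. Qed.

Lemma palpha_mul g x y : x * one (inv g) = x -> y * one (inv g) = y ->
  act g (x * y) = act g x * act g y.
Proof. by move=> /in_idealE hx /in_idealE hy; apply: palphaM. Qed.

Lemma palpha_sum g (I : Type) (r : seq I) (P : pred I) (F : I -> A) :
  (forall i, P i -> F i * one (inv g) = F i) ->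
  act g (\sum_(i <- r | P i) F i) = \sum_(i <- r | P i) act g (F i).
Proof.
move=> HF; elim: r => [|i r IH]; first by rewrite !big_nil palpha0.
rewrite !big_cons; case: ifP => Pi //; rewrite palpha_add ?IH ?HF //.
apply: (big_ind (fun x => x * one (inv g) = x)) => //; first by rewrite mul0r.
by move=> x y hx hy; rewrite mulrDl hx hy.
Qed.

Lemma palpha_id e x : e \in gobj Gd -> x * one e = x -> act e x = x.
Proof. by move=> He /in_idealE; apply: palpha_obj. Qed.

Lemma palphaK g x : x * one (inv g) = x -> act (inv g) (act g x) = x.
Proof.
move=> hx.
have e1 : s (inv g) = t g by rewrite gs_inv.
have e3 : in_ideal (one (inv (inv g))) (act g x).
  by rewrite ginvK; apply/in_idealE/palpha_ideal.
have [_ ->] := palpha_comp e1 ((in_idealE _ _).2 hx) e3.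
by rewrite gmulVg palpha_id ?gs_gobj // -gt_inv; apply: ideal_gt.
Qed.

Lemma palphaVK g y : y * one g = y -> act g (act (inv g) y) = y.
Proof. by rewrite -{1 2}[g](ginvK Gd); apply: palphaK. Qed.

Lemma palpha_pone g : act g (one (inv g)) = one g.
Proof.
have [x /in_idealE hx ex] := palpha_onto ((in_idealE g (one g)).2 (pone_idem alpha g)).
have h1 : act g (one (inv g)) * one g = act g (one (inv g)).
  by apply/palpha_ideal/pone_idem.
by rewrite -h1 -ex -palpha_mul ?pone_idem ?pone_central ?hx.
Qed.

Lemma palpha_idealM p q x : s p = t q -> x * one (inv p) = x -> x * one q = x ->
  act p x * one (mul p q) = act p x.
Proof.
move=> E hx hq.
have e1 : s (inv q) = t (inv p) by rewrite gs_inv gt_inv.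
have e2 : in_ideal (one (inv (inv p))) (act p x).
  by apply/in_idealE; rewrite ginvK; apply: palpha_ideal.
have e3 : in_ideal (one (inv (inv q))) (act (inv p) (act p x)).
  by rewrite palphaK // ginvK; apply/in_idealE.
have [/in_idealE + _] := palpha_comp e1 e2 e3.
by rewrite ginvM ?ginvK ?gs_inv ?gt_inv.
Qed.

Lemma palphaV_idealM p q y : s p = t q -> y * one p = y -> y * one (mul p q) = y ->
  act (inv p) y * one q = act (inv p) y.
Proof.
move=> E hp hpq; set z := act (inv (mul p q)) y.
have hz : z * one (inv (mul p q)) = z by apply: palpha_ideal; rewrite ginvK.
have ez : act (mul p q) z = y by rewrite palphaVK.
have e1 : s (inv p) = t (mul p q) by rewrite gs_inv gt_mul.
have e3 : in_ideal (one (inv (inv p))) (act (mul p q) z).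
  by apply/in_idealE; rewrite ez ginvK.
have [+ he] := palpha_comp e1 ((in_idealE _ _).2 hz) e3.
rewrite -ez he !gmulKg // => /in_idealE.
exact: palpha_ideal.
Qed.

Lemma palpha_pone_mul p q : s p = t q ->
  act p (one (inv p) * one q) = one p * one (mul p q).
Proof.
move=> E; set v := act (inv p) (one p * one (mul p q)).
have hw : one (inv p) * one q * one (inv p) = one (inv p) * one q.
  by rewrite -mulrA (pone_central _ q) mulrA pone_idem.
have hpq : one p * one (mul p q) * one p = one p * one (mul p q).
  by rewrite ideal_mulr // pone_idem.
have hv1 : v * one (inv p) = v by apply: palpha_ideal; rewrite ginvK.
have hv2 : v * one q = v by apply: palphaV_idealM; rewrite // -mulrA pone_idem.
have ev : act p v = one p * one (mul p q) by rewrite palphaVK.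
have he : one p * one (mul p q) * act p (one (inv p) * one q) =
          act p (one (inv p) * one q).
  rewrite -mulrA (pone_central _ (mul p q)) mulrA (pone_central _ p).
  by rewrite palpha_ideal // palpha_idealM // -mulrA pone_idem.
by rewrite -he -{1}ev -palpha_mul // mulrA hv1 hv2.
Qed.

Lemma palpha_mul_pone g p y : s g = t p -> y * one (inv g) = y ->
  act g (y * one p) = act g y * one (mul g p).
Proof.
move=> E hy.
have hw : one (inv g) * one p * one (inv g) = one (inv g) * one p.
  by rewrite -mulrA (pone_central _ p) mulrA pone_idem.
by rewrite -{1}hy -mulrA palpha_mul // palpha_pone_mul // mulrA palpha_ideal.
Qed.

Lemma palpha_compV g h y : s g = t h -> y * one (inv h) = y ->
  act g (act h y * one (inv g)) = act (mul g h) (y * one (inv (mul g h))).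
Proof.
move=> E hy.
have E' : s (inv h) = t (inv g) by rewrite gs_inv gt_inv.
have K := palpha_pone_mul E'; rewrite ginvK -ginvM // in K.
have hw : one (inv h) * one (inv (mul g h)) * one (inv h) =
          one (inv h) * one (inv (mul g h)).
  by rewrite -mulrA (pone_central _ (inv (mul g h))) mulrA pone_idem.
have ew : one h * one (inv g) = act h (one (inv h) * one (inv (mul g h))).
  by rewrite -K palphaVK // -mulrA (pone_central _ (inv g)) mulrA pone_idem.
have ex : act h y * one (inv g) = act h (y * one (inv (mul g h))).
  by rewrite -(palpha_ideal hy) -mulrA ew -palpha_mul // mulrA hy.
have hx : y * one (inv (mul g h)) * one (inv h) = y * one (inv (mul g h)).
  by rewrite -mulrA (pone_central _ (inv (mul g h))) mulrA hy.
have e3 : in_ideal (one (inv g)) (act h (y * one (inv (mul g h)))).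
  by apply/in_idealE; rewrite -ex -mulrA pone_idem.
have [_ <-] := palpha_comp E ((in_idealE _ _).2 hx) e3.
by rewrite ex.
Qed.

Lemma trace_jE j a : trace_j alpha j a = \sum_(q | t q == j) act q (a * one (inv q)).
Proof.
rewrite /trace_j /trace_ij [RHS](partition_big s (gobj Gd)) /=; last first.
  by move=> q _; apply: gs_gobj.
by apply: eq_bigr => e _; apply: eq_bigl => q; rewrite inE andbC.
Qed.

Lemma trace_j_transport ek ej g a : g \in ghom Gd ek ej -> one g = one ej ->
  trace_j alpha ek a = one ek -> trace_j alpha ej a = one ej.
Proof.
rewrite inE => /andP[/eqP hs /eqP ht] hg; rewrite !trace_jE => htr.
have hgV : one (inv g) = one ek * one (inv g).
  by rewrite pone_central -hs -gt_inv ideal_gt // pone_idem.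
rewrite -hg -palpha_pone hgV -htr mulr_suml palpha_sum; last first.
  by move=> h _; rewrite -mulrA pone_idem.
rewrite -ht -hs -(sum_gmul_left Gd g (fun q => act q (a * one (inv q)))) /=.
apply: eq_bigr => h /eqP th.
have E : s g = t h by rewrite th.
rewrite palpha_compV //; last by rewrite -mulrA pone_idem.
congr (act _ _); rewrite -mulrA; congr (_ * _).
have E2 : s (inv (mul g h)) = t g by rewrite gs_inv gt_mul.
have := palpha_pone_mul E2; rewrite ginvK ginvMKl //.
have -> : one (mul g h) * one g = one (mul g h).
  by rewrite hg -ht -(gt_mul E) ideal_gt // pone_idem.
have := palpha_pone (inv (mul g h)); rewrite ginvK => ->.
by rewrite pone_central => <-.
Qed.

End PartialAction.

Section SkewGroupoidRing.
Variables (G : finType) (Gd : groupoid G) (A : pzRingType) (alpha : upaction Gd A).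
Local Notation s := (gs Gd).
Local Notation t := (gt Gd).
Local Notation mul := (gmul Gd).
Local Notation inv := (ginv Gd).
Local Notation one := (pone alpha).
Local Notation act := (palpha alpha).
Local Notation elt := (skew_elt alpha).
Local Notation smul := (skew_mul alpha).
Local Notation sadd := (@skew_add G A).
Local Notation szero := (@skew_zero G A).
Local Notation emb := (skew_emb alpha).

Definition skew_delta (q : G) (c : A) : G -> A := fun g => if g == q then c else 0.

Lemma skew_eltE f : elt f <-> forall g, f g * one g = f g.
Proof. by split=> H g; apply/in_idealE/H. Qed.

Lemma skew_elt_delta q c : c * one q = c -> elt (skew_delta q c).
Proof.
move=> hc; apply/skew_eltE => g.
by rewrite /skew_delta; case: eqP => [->|]; rewrite ?mul0r.
Qed.

Lemma skew_elt_zero : elt szero.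
Proof. by apply/skew_eltE => g; rewrite /skew_zero mul0r. Qed.

Lemma skew_elt_big (I : Type) (r : seq I) (P : pred I) (F : I -> G -> A) :
  (forall i, P i -> elt (F i)) -> elt (\big[sadd/szero]_(i <- r | P i) F i).
Proof.
move=> HF; apply: (big_ind elt) => //; first exact: skew_elt_zero.
move=> f f' /skew_eltE hf /skew_eltE hf'.
by apply/skew_eltE => g; rewrite /skew_add mulrDl hf hf'.
Qed.

Lemma skew_sumE (I : Type) (r : seq I) (P : pred I) (F : I -> G -> A) k :
  (\big[sadd/szero]_(i <- r | P i) F i) k = \sum_(i <- r | P i) F i k.
Proof. exact: (big_morph (fun f => f k)). Qed.

Lemma skew_mul_deltar f h y k :
  smul f (skew_delta h y) k =
  \sum_(g | (s g == t h) && (mul g h == k)) act g (act (inv g) (f g) * y).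
Proof.
rewrite /skew_mul [RHS]big_mkcond; apply: eq_bigr => g _.
rewrite big_mkcond (bigD1 h) //= big1 ?addr0 => [|h' /negbTE hne]; last first.
  by rewrite /skew_delta hne mulr0 palpha0 if_same.
by rewrite /skew_delta eqxx.
Qed.

Lemma skew_mul_deltal g x f k :
  smul (skew_delta g x) f k =
  \sum_(h | (s g == t h) && (mul g h == k)) act g (act (inv g) x * f h).
Proof.
rewrite /skew_mul (bigD1 g) //= [X in _ + X]big1 ?addr0 => [|g' /negbTE hne];
  last first.
  by apply: big1 => h' _; rewrite /skew_delta hne palpha0 mul0r palpha0.
by rewrite /skew_delta eqxx.
Qed.

Lemma skew_mul_delta g x h y k :
  smul (skew_delta g x) (skew_delta h y) k =
  if (s g == t h) && (mul g h == k) then act g (act (inv g) x * y) else 0.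
Proof.
rewrite skew_mul_deltal big_mkcond (bigD1 h) //= [X in _ + X]big1 ?addr0
  => [|h' /negbTE hne].
  by rewrite /skew_delta eqxx.
by rewrite /skew_delta hne mulr0 palpha0 if_same.
Qed.

Lemma skew_delta_one_emb q c : c * one q = c ->
  smul (skew_delta q (one q)) (emb (act (inv q) c)) = skew_delta q c.
Proof.
move=> hc; apply: functional_extensionality => k.
rewrite skew_mul_deltal big_mkcond (bigD1 (s q)) //= [X in _ + X]big1 ?addr0
  => [|h hne].
  rewrite gt_s eqxx gmul_sr /skew_delta /skew_emb gs_gobj eq_sym.
  case: eqP => // _.
  have hr : act (inv q) c * one (s q) = act (inv q) c.
    by rewrite -gt_inv; apply/ideal_gt/palpha_ideal; rewrite ginvK.
  have := palpha_pone alpha (inv q); rewrite ginvK => ->.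
  by rewrite hr pone_central palpha_ideal ?ginvK // palphaVK.
rewrite /skew_emb; case: ifP => // /andP[/eqP E _].
case: ifP => hobj; last by rewrite mulr0 palpha0.
by move: hne; rewrite E gobj_t // eqxx.
Qed.

Lemma skew_emb_delta r h y : y * one h = y ->
  smul (emb r) (skew_delta h y) = skew_delta h (r * y).
Proof.
move=> hy; apply: functional_extensionality => k.
rewrite skew_mul_deltar big_mkcond (bigD1 (t h)) //= [X in _ + X]big1 ?addr0
  => [|g hne].
  rewrite gs_t eqxx gmul_tl /skew_delta /skew_emb gt_gobj eq_sym.
  case: eqP => // _.
  rewrite gobj_inv ?gt_gobj // (palpha_id (x := r * one (t h))) ?gt_gobj //; last first.
    by rewrite -mulrA pone_idem.
  by rewrite -mulrA pone_central (ideal_gt hy) palpha_id ?gt_gobj // -mulrA ideal_gt.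
rewrite /skew_emb; case: ifP => // /andP[/eqP E _].
case: ifP => hobj; last by rewrite palpha0 mul0r palpha0.
by move: hne; rewrite -E gobj_s // eqxx.
Qed.

Lemma skew_sum_enum (F : G -> G -> A) :
  \big[sadd/szero]_(i < #|G|) F (enum_val i) = \big[sadd/szero]_p F p.
Proof.
apply: functional_extensionality => k.
by rewrite !skew_sumE -(big_enum_val (fun p => F p k)).
Qed.

Lemma skew_mul_delta_one f p : elt f ->
  smul f (skew_delta p (one p)) =
  \big[sadd/szero]_(g | s g == t p) skew_delta (mul g p) (f g * one (mul g p)).
Proof.
move/skew_eltE=> hf; apply: functional_extensionality => k.
rewrite skew_mul_deltar skew_sumE big_mkcondr; apply: eq_bigr => g /eqP E.
rewrite /skew_delta eq_sym; case: eqP => // _.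
by rewrite palpha_mul_pone ?palphaVK //; apply: palpha_ideal; rewrite ginvK.
Qed.

Lemma skew_delta_central_mul a f p : center_of a -> elt f ->
  smul (skew_delta (inv p) (a * one (inv p))) f =
  \big[sadd/szero]_(h | t h == t p)
     skew_delta (mul (inv p) h) (a * act (inv p) (f h * one p)).
Proof.
move=> ca /skew_eltE hf; apply: functional_extensionality => k.
rewrite skew_mul_deltal skew_sumE.
rewrite (eq_bigl (fun h => (t h == t p) && (mul (inv p) h == k))); last first.
  by move=> h; rewrite gs_inv eq_sym.
rewrite big_mkcondr; apply: eq_bigr => h /eqP E.
rewrite /skew_delta eq_sym; case: eqP => // _; rewrite ginvK.
set X := act p (a * one (inv p)).
have hX : X * one p = X by apply: palpha_ideal; rewrite -mulrA pone_idem.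
have hfp : f h * one p * one p = f h * one p by rewrite -mulrA pone_idem.
rewrite -hX -mulrA (pone_central _ p) palpha_mul ?ginvK // palphaK; last first.
  by rewrite -mulrA pone_idem.
by rewrite -mulrA pone_central palpha_ideal // ginvK.
Qed.

Section Balanced.
Variables (M : zmodType) (b : (G -> A) -> (G -> A) -> M).
Hypothesis hb : balanced elt (fun r => exists a, r = emb a) sadd smul b.

Let sadd00 : sadd szero szero = szero.
Proof.
by apply: functional_extensionality => g; rewrite /skew_add /skew_zero addr0.
Qed.

Lemma balanced_suml (I : Type) (r : seq I) (P : pred I) (F : I -> G -> A) y :
  (forall i, P i -> elt (F i)) -> elt y ->
  b (\big[sadd/szero]_(i <- r | P i) F i) y = \sum_(i <- r | P i) b (F i) y.
Proof.
move=> HF hy; elim: r => [|i r IH].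
  have := hb.1 _ _ _ skew_elt_zero skew_elt_zero hy; rewrite sadd00 !big_nil.
  by move=> E; apply: (@addrI _ (b szero y)); rewrite addr0 -E.
rewrite !big_cons; case: ifP => Pi //.
by rewrite hb.1 ?IH //; [apply: HF | apply: skew_elt_big].
Qed.

Lemma balanced_sumr (I : Type) (r : seq I) (P : pred I) (F : I -> G -> A) x :
  (forall i, P i -> elt (F i)) -> elt x ->
  b x (\big[sadd/szero]_(i <- r | P i) F i) = \sum_(i <- r | P i) b x (F i).
Proof.
move=> HF hx; elim: r => [|i r IH].
  have := hb.2.1 _ _ _ hx skew_elt_zero skew_elt_zero; rewrite sadd00 !big_nil.
  by move=> E; apply: (@addrI _ (b x szero)); rewrite addr0 -E.
rewrite !big_cons; case: ifP => Pi //.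
by rewrite hb.2.1 ?IH //; [apply: HF | apply: skew_elt_big].
Qed.

End Balanced.

Definition sep_left (p : G) : G -> A := skew_delta p (one p).
Definition sep_right (a : A) (p : G) : G -> A := skew_delta (inv p) (a * one (inv p)).

Lemma skew_elt_sep_left p : elt (sep_left p).
Proof. exact/skew_elt_delta/pone_idem. Qed.

Lemma skew_elt_sep_right a p : elt (sep_right a p).
Proof. by apply: skew_elt_delta; rewrite -mulrA pone_idem. Qed.

Lemma sep_mul_sum a : (forall j, j \in gobj Gd -> trace_j alpha j a = one j) ->
  \big[sadd/szero]_p smul (sep_left p) (sep_right a p) = emb 1.
Proof.
move=> htr; apply: functional_extensionality => k; rewrite skew_sumE.
transitivity (\sum_(p | t p == k) act p (a * one (inv p))).
  rewrite [RHS]big_mkcond; apply: eq_bigr => p _.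
  rewrite skew_mul_delta gt_inv eqxx gmulV /=; case: ifP => // _.
  have := palpha_pone alpha (inv p); rewrite ginvK => ->.
  by rewrite mulrA pone_central -mulrA pone_idem.
rewrite -trace_jE /skew_emb; case: ifP => hk; first by rewrite htr // mul1r.
by rewrite trace_jE big1 // => p /eqP tp; move: hk; rewrite -tp gt_gobj.
Qed.

Section Commutation.
Variables (M : zmodType) (b : (G -> A) -> (G -> A) -> M) (a : A) (f : G -> A).
Hypotheses (hb : balanced elt (fun r => exists a, r = emb a) sadd smul b)
  (ca : center_of a) (hf : elt f).

Let coeff q g := act (inv q) (f g * one q).

Let coeff_ideal q g : t q = t g -> coeff q g * one (mul (inv q) g) = coeff q g.
Proof.
move=> E; apply: palpha_idealM; rewrite ?gs_inv ?ginvK // -?mulrA ?pone_idem //.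
by rewrite (pone_central _ q) mulrA (proj1 (skew_eltE f) hf).
Qed.

Let sep_term q g := b (sep_left q) (skew_delta (mul (inv q) g) (a * coeff q g)).

Lemma sep_mul_left_term p :
  b (smul f (sep_left p)) (sep_right a p) = \sum_(g | s g == t p) sep_term (mul g p) g.
Proof.
rewrite skew_mul_delta_one // balanced_suml //; last exact: skew_elt_sep_right.
  apply: eq_bigr => g /eqP E; set q := mul g p.
  have hc : f g * one q * one q = f g * one q by rewrite -mulrA pone_idem.
  have hl := skew_elt_sep_left q; have hr := skew_elt_sep_right a p.
  rewrite -(skew_delta_one_emb hc) hb.2.2 //; last by eexists.
  rewrite skew_emb_delta; last by rewrite -mulrA pone_idem.
  rewrite /sep_term -(ginvMKl E) -/q mulrA -ca -mulrA.
  by rewrite -/(coeff q g) coeff_ideal // gt_mul.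
by move=> g _; apply: skew_elt_delta; rewrite -mulrA pone_idem.
Qed.

Lemma sep_mul_right_term q :
  b (sep_left q) (smul (sep_right a q) f) = \sum_(g | t g == t q) sep_term q g.
Proof.
rewrite /sep_right skew_delta_central_mul // balanced_sumr //.
  by move=> g /eqP E; apply/skew_elt_delta; rewrite -mulrA coeff_ideal.
exact: skew_elt_sep_left.
Qed.

Lemma sep_commute :
  \sum_p b (smul f (sep_left p)) (sep_right a p) =
  \sum_p b (sep_left p) (smul (sep_right a p) f).
Proof.
under eq_bigr do rewrite sep_mul_left_term.
under [RHS]eq_bigr do rewrite sep_mul_right_term.
rewrite (exchange_big_dep xpredT) //= [RHS](exchange_big_dep xpredT) //=.
apply: eq_bigr => g _.
under eq_bigl do rewrite eq_sym; under [RHS]eq_bigl do rewrite eq_sym.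
exact: sum_gmul_left.
Qed.

End Commutation.

End SkewGroupoidRing.

Theorem corollary3p5 (G : finType) (Gd : groupoid G) (A : pzRingType)
    (alpha : upaction Gd A) :
  gconnected Gd ->
  obj_direct_sum alpha ->
  forall (a : A) (ek : G), center_of a -> ek \in gobj Gd ->
  trace_j alpha ek a = pone alpha ek ->
  (forall ej, ej \in gobj Gd ->
     exists2 gj, gj \in ghom Gd ek ej & pone alpha gj = pone alpha ej) ->
  skew_separable alpha.
Proof.
move=> _ _ a ek ca _ htr hg.
have htr_all j : j \in gobj Gd -> trace_j alpha j a = pone alpha j.
  by move=> /hg [gj hgj hoj]; apply: trace_j_transport hgj hoj htr.
exists #|G|, (fun i => sep_left alpha (enum_val i)),
  (fun i => sep_right alpha a (enum_val i)); split.
  by move=> i; split; [apply: skew_elt_sep_left | apply: skew_elt_sep_right].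
split.
  rewrite (skew_sum_enum
    (fun p => skew_mul alpha (sep_left alpha p) (sep_right alpha a p))).
  exact: sep_mul_sum.
move=> f hf M b hb.
rewrite -(big_enum_val
  (fun p => b (skew_mul alpha f (sep_left alpha p)) (sep_right alpha a p))).
rewrite -(big_enum_val
  (fun p => b (sep_left alpha p) (skew_mul alpha (sep_right alpha a p) f))).
exact: sep_commute.
Qed.
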